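(* In the setting of the adaptive implicit-explicit iteration described in the context, the generated sequence $\{(\lambda_k,\bm d_k)\}_{k\ge0}$ satisfies, for every $k\ge0$, $\lambda_k\ge0$, $\|\bm d_k\|_2\le r$, and $\lambda_k(\|\bm d_k\|_2-r)=0$.
   Context: Let $n\ge1$, $r>0$, $\bm g\in\mathbb R^n$ with $\bm g\neq0$, and $\bm H=\bm D+\bm T\in\mathbb R^{n\times n}$, where $\bm D$ is diagonal with nonnegative diagonal entries $D_{i,i}$ and $\bm T$ is symmetric. (In the paper, $\bm D$ and $\bm T$ are the parts of the Hessian of the discretized Landau–Brazovskii energy coming from the interaction and the bulk terms.) Let $f(\bm d)=\bm g^\top\bm d+\frac12\bm d^\top\bm H\bm d$, and consider the trust region subproblem $\min_{\|\bm d\|_2\le r}f(\bm d)$. Adaptive implicit-explicit iteration with step size $\eta>0$: set $\bm d_0=-r\bm g/\|\bm g\|_2$ and $\lambda_0=0$. For $k=0,1,2,\dots$ (run indefinitely): let $\bm b_k=\bm d_k-\eta(\bm g+\bm T\bm d_k)$ and $\phi_k(\lambda)=\sum_{i=1}^n\big([\bm b_k]_i/(1+\eta(D_{i,i}+\lambda))\big)^2$ for $\lambda\ge0$; set $\lambda_{k+1}=0$ if $\phi_k(0)\le r^2$, and otherwise let $\lambda_{k+1}>0$ be the (unique) solution of $\phi_k(\lambda)=r^2$; then $\bm d_{k+1}=(\bm I+\eta(\bm D+\lambda_{k+1}\bm I))^{-1}\bm b_k$. *)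

From HB Require Import structures.
From mathcomp Require Import all_boot all_order all_algebra.
Set Implicit Arguments. Unset Strict Implicit. Unset Printing Implicit Defensive.
Import Order.TTheory GRing.Theory Num.Theory.
Local Open Scope ring_scope.

Definition norm2 (R : rcfType) (n : nat) (v : 'cV[R]_n) : R :=
  Num.sqrt (\sum_(i < n) (v i 0) ^+ 2).

Definition aiie_phi (R : rcfType) (n : nat) (D : 'M[R]_n) (eta : R)
  (b : 'cV[R]_n) (lam : R) : R :=
  \sum_(i < n) (b i 0 / (1 + eta * (D i i + lam))) ^+ 2.

Definition aiie_b (R : rcfType) (n : nat) (T : 'M[R]_n) (g : 'cV[R]_n)
  (eta : R) (dk : 'cV[R]_n) : 'cV[R]_n :=
  dk - eta *: (g + T *m dk).

Definition aiie_step (R : rcfType) (n : nat) (D T : 'M[R]_n) (g : 'cV[R]_n)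
  (r eta : R) (dk : 'cV[R]_n) (lam1 : R) (d1 : 'cV[R]_n) : Prop :=
  let b := aiie_b T g eta dk in
  (aiie_phi D eta b 0 <= r ^+ 2 -> lam1 = 0) /\
  (r ^+ 2 < aiie_phi D eta b 0 -> 0 < lam1 /\ aiie_phi D eta b lam1 = r ^+ 2) /\
  d1 = invmx (1%:M + eta *: (D + lam1%:M)) *m b.

(* Each step computes d_{k+1} = (I + eta (D + lambda I))^-1 b_k with a diagonal
   matrix, so ||d_{k+1}||^2 = phi_k(lambda_{k+1}).  Either lambda_{k+1} = 0 and
   phi_k(0) <= r^2, or lambda_{k+1} > 0 solves phi_k = r^2 and d_{k+1} lies on
   the sphere: in both cases feasibility and complementary slackness hold.
   At the start lambda_0 = 0 and d_0 has norm r. *)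
From HB Require Import structures.
From mathcomp Require Import all_boot all_order all_algebra.
Import Order.TTheory GRing.Theory Num.Theory.
Local Open Scope ring_scope.

Lemma invmx_diag_mx (F : fieldType) (n : nat) (w : 'rV[F]_n) :
  (forall i, w 0 i != 0) -> invmx (diag_mx w) = diag_mx (\row_i (w 0 i)^-1).
Proof.
move=> w_neq0.
have w_rinv : diag_mx w *m diag_mx (\row_i (w 0 i)^-1) = 1%:M.
  apply/matrixP => i j; rewrite mulmx_diag !mxE.
  by case: (i == j); rewrite ?mulr1n ?divff ?mulr0n.
have [w_unit _] := mulmx1_unit w_rinv.
by rewrite -[RHS](mulKmx w_unit) w_rinv mulmx1.
Qed.

Lemma diag_shift_mx (R : comPzRingType) (n : nat) (D : 'M[R]_n) (eta lam : R) :
  is_diag_mx D ->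
  1%:M + eta *: (D + lam%:M) = diag_mx (\row_i (1 + eta * (D i i + lam))).
Proof.
move=> /is_diag_mxP D_diag; apply/matrixP => i j; rewrite !mxE.
case: (eqVneq i j) => [->|i_neq_j]; first by rewrite !mulr1n.
by rewrite !mulr0n D_diag // addr0 mulr0 add0r.
Qed.

Section Norm2.
Context {R : rcfType} {n : nat}.

Lemma norm2_ge0 (v : 'cV[R]_n) : 0 <= norm2 v.
Proof. exact: sqrtr_ge0. Qed.

Lemma norm2Z (a : R) (v : 'cV[R]_n) : norm2 (a *: v) = `|a| * norm2 v.
Proof.
rewrite /norm2; under eq_bigr => i _ do rewrite mxE exprMn.
by rewrite -mulr_sumr sqrtrM ?sqr_ge0 // sqrtr_sqr.
Qed.

Lemma norm2_rescale_le (a : R) (v : 'cV[R]_n) :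
  norm2 ((a / norm2 v) *: v) <= `|a|.
Proof.
rewrite norm2Z normrM normfV (ger0_norm (norm2_ge0 v)).
have [->|v_neq0] := eqVneq (norm2 v) 0; first by rewrite mulr0.
by rewrite divfK.
Qed.

End Norm2.

Lemma norm2_aiie_update (R : rcfType) (n : nat) (D : 'M[R]_n) (eta lam : R)
    (b : 'cV[R]_n) :
  is_diag_mx D -> (forall i, 0 <= D i i) -> 0 < eta -> 0 <= lam ->
  norm2 (invmx (1%:M + eta *: (D + lam%:M)) *m b) =
  Num.sqrt (aiie_phi D eta b lam).
Proof.
move=> D_diag D_ge0 eta_gt0 lam_ge0.
have shift_gt0 i : 0 < 1 + eta * (D i i + lam).
  by apply: ltr_wpDr; rewrite // mulr_ge0 ?addr_ge0 // ltW.
rewrite diag_shift_mx // invmx_diag_mx => [|i]; last first.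
  by rewrite mxE gt_eqF.
rewrite /norm2 /aiie_phi mul_diag_mx; congr Num.sqrt.
by apply: eq_bigr => i _; rewrite !mxE mulrC.
Qed.

Definition trust_region_kkt {R : rcfType} {n : nat} (r lam : R) (d : 'cV[R]_n)
  : Prop :=
  0 <= lam /\ norm2 d <= r /\ lam * (norm2 d - r) = 0.

Lemma aiie_step_kkt (R : rcfType) (n : nat) (D T : 'M[R]_n) (g : 'cV[R]_n)
    (r eta : R) (dk : 'cV[R]_n) (lam1 : R) (d1 : 'cV[R]_n) :
  0 < r -> is_diag_mx D -> (forall i, 0 <= D i i) -> 0 < eta ->
  aiie_step D T g r eta dk lam1 d1 -> trust_region_kkt r lam1 d1.
Proof.
move=> r_gt0 D_diag D_ge0 eta_gt0.
rewrite /aiie_step; set b := aiie_b T g eta dk => -[inside [boundary ->]].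
have sqrt_r2 : Num.sqrt (r ^+ 2) = r by rewrite sqrtr_sqr ger0_norm ?ltW.
have [phi0_le|phi0_gt] := leP (aiie_phi D eta b 0) (r ^+ 2).
  rewrite /trust_region_kkt inside // mul0r norm2_aiie_update //.
  by split=> //; split=> //; rewrite -[leRHS]sqrt_r2 ler_sqrt ?sqr_ge0.
have [/ltW lam1_ge0 phi_lam1] := boundary phi0_gt.
rewrite /trust_region_kkt norm2_aiie_update // phi_lam1 sqrt_r2.
by rewrite subrr mulr0.
Qed.

Theorem mainTheorem3 (R : rcfType) (n : nat) (r eta : R) (g : 'cV[R]_n)
  (D T : 'M[R]_n) (lam : nat -> R) (d : nat -> 'cV[R]_n) :
  (0 < n)%N -> 0 < r -> g != 0 ->
  is_diag_mx D -> (forall i, 0 <= D i i) -> T^T = T -> 0 < eta ->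
  d 0%N = (- r / norm2 g) *: g -> lam 0%N = 0 ->
  (forall k : nat, aiie_step D T g r eta (d k) (lam k.+1) (d k.+1)) ->
  forall k : nat,
    0 <= lam k /\ norm2 (d k) <= r /\ lam k * (norm2 (d k) - r) = 0.
Proof.
move=> _ r_gt0 _ D_diag D_ge0 _ eta_gt0 d0 lam0 step [|k].
  rewrite d0 lam0 mul0r; split=> //; split=> //.
  by have := norm2_rescale_le (- r) g; rewrite normrN (ger0_norm (ltW r_gt0)).
exact: aiie_step_kkt (step k).
Qed.
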